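(* Let $\mathbf{A}\in\mathbb{C}^{M\times N_a}$, $\mathbf{B}\in\mathbb{C}^{M\times N_b}$ have unit-$\ell_2$-norm columns with coherence parameters $\mu_a,\mu_b,\mu_m$. Let $\mathcal{E}\subseteq\{1,\dots,N_b\}$, $|\mathcal{E}|=n_e$, with $1-\mu_b(n_e-1)>0$, let $\mathbf{R}_{\mathcal{E}}=\mathbf{I}_M-\mathbf{B}_{\mathcal{E}}\mathbf{B}_{\mathcal{E}}^\dagger$ and let $\tilde{\mathbf{a}}_i=\mathbf{R}_{\mathcal{E}}\mathbf{a}_i$ be the columns of $\mathbf{R}_{\mathcal{E}}\mathbf{A}$. Then for all $i\ne j$ $$|\tilde{\mathbf{a}}_i^H\tilde{\mathbf{a}}_j|\le\mu_a+\frac{n_e\mu_m^2}{1-\mu_b(n_e-1)},$$ and for all $i$ $$\|\tilde{\mathbf{a}}_i\|_2^2\ge1-\frac{n_e\mu_m^2}{1-\mu_b(n_e-1)}.$$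
   Context: Coherence parameters: $\mu_a=\max_{k\ne\ell}|\mathbf{a}_k^H\mathbf{a}_\ell|$, $\mu_b=\max_{k\ne\ell}|\mathbf{b}_k^H\mathbf{b}_\ell|$, $\mu_m=\max_{k,\ell}|\mathbf{a}_k^H\mathbf{b}_\ell|$. $\mathbf{B}_{\mathcal{E}}$ is the column submatrix of $\mathbf{B}$ indexed by $\mathcal{E}$; $\mathbf{M}^\dagger=(\mathbf{M}^H\mathbf{M})^{-1}\mathbf{M}^H$. *)

(* Complex scalars: an arbitrary numClosedFieldType C
   (e.g. algC); conjugation is Num.conj (notation x^* ). *)
From HB Require Import structures.
From mathcomp Require Import all_boot all_order all_algebra.
Set Implicit Arguments. Unset Strict Implicit. Unset Printing Implicit Defensive.
Import Order.TTheory GRing.Theory Num.Theory.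
Local Open Scope ring_scope.

Section Defs.
Variable C : numClosedFieldType.

Definition adjmx (m n : nat) (A : 'M[C]_(m, n)) : 'M[C]_(n, m) :=
  (map_mx (fun x => x^*) A)^T.

Definition cinner (m : nat) (u v : 'cV[C]_m) : C :=
  \sum_(i < m) (u i 0)^* * v i 0.

Definition normsq (m : nat) (u : 'cV[C]_m) : C := \sum_(i < m) `|u i 0| ^+ 2.

(* binary maximum (used on nonnegative reals in C) *)
Definition cmax (x y : C) : C := if x <= y then y else x.

(* mu_a = max_{k<>l} |a_k^H a_l|  (0 if fewer than two columns) *)
Definition mutual_coh (m n : nat) (A : 'M[C]_(m, n)) : C :=
  \big[cmax/0]_(k < n) \big[cmax/0]_(l < n | k != l)
     `|cinner (col k A) (col l A)|.

Definition cross_coh (m na nb : nat) (A : 'M[C]_(m, na)) (B : 'M[C]_(m, nb)) : C :=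
  \big[cmax/0]_(k < na) \big[cmax/0]_(l < nb) `|cinner (col k A) (col l B)|.

Definition unit_cols (m n : nat) (A : 'M[C]_(m, n)) : Prop :=
  forall k : 'I_n, normsq (col k A) = 1.

(* B_E: columns of B indexed by E (in increasing order) *)
Definition subcols (m n : nat) (B : 'M[C]_(m, n)) (E : {set 'I_n}) : 'M[C]_(m, #|E|) :=
  colsub (fun j : 'I_#|E| => @enum_val _ (pred_of_set E) j) B.

(* Moore-Penrose pseudo-inverse for full column rank: (M^H M)^{-1} M^H *)
Definition pinvH (m n : nat) (Mx : 'M[C]_(m, n)) : 'M[C]_(n, m) :=
  invmx (adjmx Mx *m Mx) *m adjmx Mx.

Definition projR (m n : nat) (B : 'M[C]_(m, n)) (E : {set 'I_n}) : 'M[C]_m :=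
  1%:M - subcols B E *m pinvH (subcols B E).

End Defs.

From HB Require Import structures.
From mathcomp Require Import all_boot all_order all_algebra ring.
Import Order.TTheory GRing.Theory Num.Theory.
Local Open Scope ring_scope.
Set Implicit Arguments. Unset Strict Implicit.

(* Write G = B_E^H B_E for the Gram matrix of the selected columns of B.  It
   has unit diagonal and off-diagonal entries bounded by mu_b, so (Gershgorin
   in l1 form) ||G x||_1 >= (1 - mu_b (n_e - 1)) ||x||_1; in particular G is
   invertible and ||G^-1 v||_1 <= ||v||_1 / (1 - mu_b (n_e - 1)).

   R_E = I - B_E G^-1 B_E^H is a Hermitian idempotent, hence
     (R_E a)^H (R_E b) = a^H b - (B_E^H a)^H G^-1 (B_E^H b),
   and the correction term is bounded by n_e mu_m^2 / (1 - mu_b (n_e - 1)),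
   since every entry of B_E^H a_i has modulus at most mu_m.  Both claims of
   the theorem follow from this identity: for i <> j with |a_i^H a_j| <= mu_a,
   and for i = j with ||a_i||^2 = 1. *)

Section Adjoint.
Variable C : numClosedFieldType.

Lemma adjmx_mulE m n p (X : 'M[C]_(m, n)) (Y : 'M[C]_(m, p)) k l :
  (adjmx X *m Y) k l = cinner (col k X) (col l Y).
Proof. by rewrite /cinner mxE; apply: eq_bigr => i _; rewrite /adjmx !mxE. Qed.

Lemma cinnerE m (u v : 'cV[C]_m) : cinner u v = (adjmx u *m v) 0 0.
Proof. by rewrite adjmx_mulE !col_id. Qed.

Lemma adjmxM m n p (X : 'M[C]_(m, n)) (Y : 'M[C]_(n, p)) :
  adjmx (X *m Y) = adjmx Y *m adjmx X.
Proof. by rewrite /adjmx (map_mxM Num.conj) trmx_mul. Qed.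

Lemma adjmxK m n (X : 'M[C]_(m, n)) : adjmx (adjmx X) = X.
Proof. by apply/matrixP => i j; rewrite /adjmx !mxE /= conjCK. Qed.

Lemma adjmxB m n (X Y : 'M[C]_(m, n)) : adjmx (X - Y) = adjmx X - adjmx Y.
Proof. by apply/matrixP => i j; rewrite /adjmx !mxE rmorphB. Qed.

Lemma adjmx1 n : adjmx (1%:M : 'M[C]_n) = 1%:M.
Proof. by rewrite /adjmx (map_mx1 Num.conj) trmx1. Qed.

Lemma adjmx_inv n (X : 'M[C]_n) : adjmx (invmx X) = invmx (adjmx X).
Proof. by rewrite /adjmx (map_invmx Num.conj) trmx_inv. Qed.

Lemma cinnerC m (u v : 'cV[C]_m) : cinner v u = (cinner u v)^*.
Proof.
rewrite /cinner rmorph_sum; apply: eq_bigr => k _.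
by rewrite rmorphM /= conjCK mulrC.
Qed.

Lemma normsq_cinner m (u : 'cV[C]_m) : normsq u = cinner u u.
Proof. by apply: eq_bigr => i _; rewrite normCK mulrC. Qed.

Lemma normsq_real m (u : 'cV[C]_m) : normsq u \is Num.real.
Proof. by rewrite ger0_real // sumr_ge0 // => k _; rewrite exprn_ge0. Qed.

Lemma col_mulmx m n p (X : 'M[C]_(m, n)) (Y : 'M[C]_(n, p)) i :
  col i (X *m Y) = X *m col i Y.
Proof. by rewrite !colE mulmxA. Qed.

End Adjoint.

Section Coherence.
Variable C : numClosedFieldType.

Lemma bigcmax_ub (I : eqType) (r : seq I) (P : pred I) (F : I -> C) :
  (forall i, 0 <= F i) ->
  0 <= \big[@cmax C/0]_(i <- r | P i) F i /\
  forall i, i \in r -> P i -> F i <= \big[@cmax C/0]_(i <- r | P i) F i.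
Proof.
move=> F_ge0; elim: r => [|a r [IH0 IH]]; first by rewrite big_nil.
rewrite big_cons /cmax; case: ifP => Pa; last first.
  by split=> // i; rewrite in_cons => /orP [/eqP -> | ir Pi]; [rewrite Pa | exact: IH].
have [Fa_le | /negbT Fa_gt] := ifP.
  split; first exact: le_trans (F_ge0 a) Fa_le.
  by move=> i; rewrite in_cons => /orP [/eqP -> //| ir Pi]; exact: IH.
have le_Fa : \big[@cmax C/0]_(i <- r | P i) F i <= F a.
  by move: Fa_gt; rewrite real_leNgt ?ger0_real // negbK => /ltW.
split=> // i; rewrite in_cons => /orP [/eqP -> //| ir Pi].
exact: le_trans (IH i ir Pi) le_Fa.
Qed.

Lemma bigcmax2_ub (I J : finType) (P : I -> pred J) (F : I -> J -> C) k l :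
  (forall k l, 0 <= F k l) -> P k l ->
  F k l <= \big[@cmax C/0]_(k : I) \big[@cmax C/0]_(l : J | P k l) F k l.
Proof.
move=> F_ge0 Pkl.
have [_ ub_out] := bigcmax_ub (index_enum I) xpredT
  (fun k => proj1 (bigcmax_ub (index_enum J) (P k) (F_ge0 k))).
apply: le_trans (ub_out k (mem_index_enum _) isT).
exact: (proj2 (bigcmax_ub (index_enum J) (P k) (F_ge0 k))) _ (mem_index_enum _) Pkl.
Qed.

Lemma mutual_coh_ub m n (A : 'M[C]_(m, n)) k l : k != l ->
  `|cinner (col k A) (col l A)| <= mutual_coh A.
Proof.
by move=> kl; apply: (bigcmax2_ub (P := fun k l => k != l)
  (F := fun k l => `|cinner (col k A) (col l A)|)).
Qed.

Lemma cross_coh_ub m na nb (A : 'M[C]_(m, na)) (B : 'M[C]_(m, nb)) k l :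
  `|cinner (col k A) (col l B)| <= cross_coh A B.
Proof.
exact: (bigcmax2_ub (P := fun _ _ => true) (F := fun k l => `|cinner (col k A) (col l B)|)).
Qed.

Lemma cross_coh_ge0 m na nb (A : 'M[C]_(m, na)) (B : 'M[C]_(m, nb)) :
  0 <= cross_coh A B.
Proof.
have inner_ge0 k := proj1 (bigcmax_ub (index_enum 'I_nb) xpredT
  (fun l => normr_ge0 (cinner (col k A) (col l B)))).
exact: proj1 (bigcmax_ub (index_enum 'I_na) xpredT inner_ge0).
Qed.

End Coherence.

Section Gram.
Variable C : numClosedFieldType.
Variables (n : nat) (G : 'M[C]_n) (mu : C).
Hypothesis G_diag : forall k, G k k = 1.
Hypothesis G_offdiag : forall k l, k != l -> `|G k l| <= mu.

Lemma gram_l1_lower (x : 'cV[C]_n) :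
  (1 - mu * (n%:R - 1)) * \sum_k `|x k 0| <= \sum_k `|(G *m x) k 0|.
Proof.
set S := \sum_k `|x k 0|.
have row_bound k : `|x k 0| <= `|(G *m x) k 0| + mu * (S - `|x k 0|).
  have -> : S = `|x k 0| + \sum_(l < n | l != k) `|x l 0| by rewrite /S (bigD1 k).
  rewrite (addrC `|x k 0|) addrK.
  have Gx_k : (G *m x) k 0 = x k 0 + \sum_(l < n | l != k) G k l * x l 0.
    by rewrite mxE (bigD1 k) //= G_diag mul1r.
  rewrite -[x k 0](addrK (\sum_(l < n | l != k) G k l * x l 0)) -Gx_k.
  apply: le_trans (ler_normB _ _) _; rewrite lerD2l.
  apply: le_trans (ler_norm_sum _ _ _) _.
  rewrite mulr_sumr; apply: ler_sum => l lk; rewrite normrM.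
  by apply: ler_wpM2r => //; apply: G_offdiag; rewrite eq_sym.
have : S <= \sum_k (`|(G *m x) k 0| + mu * (S - `|x k 0|)).
  exact: ler_sum.
rewrite big_split /= -mulr_sumr sumrB sumr_const card_ord -/S.
have -> : (1 - mu * (n%:R - 1)) * S = S - mu * (S *+ n - S).
  by rewrite mulrBl mul1r -mulrA mulrBl mul1r mulr_natl.
by rewrite lerBlDr.
Qed.

Hypothesis dominant : 0 < 1 - mu * (n%:R - 1).

Lemma gram_unitmx : G \in unitmx.
Proof.
rewrite -unitmx_tr -row_free_unit; apply: inj_row_free => v vG0.
have Gv0 : G *m v^T = 0 by rewrite -[G]trmxK -trmx_mul vG0 trmx0.
have l1_v0 : \sum_k `|v^T k 0| = 0.
  apply/eqP; rewrite eq_le sumr_ge0 // andbT -(pmulr_rle0 _ dominant).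
  apply: le_trans (gram_l1_lower v^T) _.
  by rewrite Gv0 big1 // => k _; rewrite mxE normr0.
apply/matrixP => i j; rewrite (ord1 i) mxE.
move/eqP: l1_v0; rewrite psumr_eq0 // => /allP /(_ j (mem_index_enum _)).
by rewrite mxE normr_eq0 => /eqP.
Qed.

Lemma gram_inv_form (mm : C) (u v : 'cV[C]_n) :
  0 <= mm -> (forall k, `|u k 0| <= mm) -> (forall k, `|v k 0| <= mm) ->
  `|cinner u (invmx G *m v)| <= n%:R * mm ^+ 2 / (1 - mu * (n%:R - 1)).
Proof.
move=> mm_ge0 u_le v_le; have c_pos := dominant.
set c := 1 - _ in c_pos *; set x := invmx G *m v.
have Gx : G *m x = v by rewrite /x mulmxA mulmxV ?gram_unitmx // mul1mx.
have l1_v : \sum_k `|v k 0| <= n%:R * mm.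
  apply: le_trans (ler_sum _ (fun k _ => v_le k)) _.
  by rewrite sumr_const card_ord mulr_natl.
have l1_x : \sum_k `|x k 0| <= n%:R * mm / c.
  rewrite ler_pdivlMr // mulrC; apply: le_trans l1_v.
  by rewrite -Gx; exact: gram_l1_lower.
rewrite /cinner; apply: le_trans (ler_norm_sum _ _ _) _.
apply: (@le_trans _ _ (mm * \sum_k `|x k 0|)).
  rewrite mulr_sumr; apply: ler_sum => k _; rewrite normrM norm_conjC.
  exact: ler_wpM2r.
have -> : n%:R * mm ^+ 2 / c = mm * (n%:R * mm / c) by ring.
exact: ler_wpM2l.
Qed.

End Gram.

Section Projector.
Variable C : numClosedFieldType.
Variables (m n : nat) (Bs : 'M[C]_(m, n)).
Let G := adjmx Bs *m Bs.
Let R := 1%:M - Bs *m pinvH Bs.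
Hypothesis G_unit : G \in unitmx.

Lemma projR_adj : adjmx R = R.
Proof.
have G_herm : adjmx G = G by rewrite /G adjmxM adjmxK.
by rewrite /R /pinvH adjmxB adjmx1 !adjmxM adjmx_inv G_herm adjmxK mulmxA.
Qed.

Lemma projR_idem : R *m R = R.
Proof.
have P_idem : Bs *m pinvH Bs *m (Bs *m pinvH Bs) = Bs *m pinvH Bs.
  rewrite /pinvH -[in RHS](mul1mx (invmx G)) -(mulVmx G_unit) /G.
  by rewrite !mulmxA.
by rewrite /R mulmxBl mul1mx mulmxBr mulmx1 P_idem subrr subr0.
Qed.

Lemma cinner_projR (a b : 'cV[C]_m) :
  cinner (R *m a) (R *m b) =
  cinner a b - cinner (adjmx Bs *m a) (invmx G *m (adjmx Bs *m b)).
Proof.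
rewrite !cinnerE [adjmx (R *m a)]adjmxM projR_adj -mulmxA (mulmxA R) projR_idem.
rewrite {1}/R mulmxBl mul1mx mulmxBr [LHS]mxE [X in _ + X]mxE.
by rewrite adjmxM adjmxK /pinvH -/G !mulmxA.
Qed.

End Projector.

Theorem mainTheorem9 (C : numClosedFieldType) (M Na Nb : nat)
  (A : 'M[C]_(M, Na)) (B : 'M[C]_(M, Nb)) (E : {set 'I_Nb}) :
  unit_cols A -> unit_cols B ->
  0 < 1 - mutual_coh B * (#|E|%:R - 1) ->
  let At := projR B E *m A in
  let bnd := #|E|%:R * cross_coh A B ^+ 2 / (1 - mutual_coh B * (#|E|%:R - 1)) in
  (forall i j : 'I_Na, i != j ->
     `|cinner (col i At) (col j At)| <= mutual_coh A + bnd) /\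
  (forall i : 'I_Na, 1 - bnd <= normsq (col i At)).
Proof.
move=> unitA unitB dominant At bnd.
set Bs := subcols B E; set G := adjmx Bs *m Bs.
have colBs k : col k Bs = col (enum_val k) B by rewrite col_colsub.
have G_diag k : G k k = 1 by rewrite adjmx_mulE colBs -normsq_cinner unitB.
have G_offdiag k l : k != l -> `|G k l| <= mutual_coh B.
  by move=> kl; rewrite adjmx_mulE !colBs mutual_coh_ub // (inj_eq enum_val_inj).
have G_unit := gram_unitmx G_diag G_offdiag dominant.
have BsA_le i k : `|(adjmx Bs *m col i A) k 0| <= cross_coh A B.
  by rewrite adjmx_mulE colBs cinnerC norm_conjC col_id cross_coh_ub.
have correction_le i j : `|cinner (adjmx Bs *m col i A)
                                  (invmx G *m (adjmx Bs *m col j A))| <= bnd.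
  exact: gram_inv_form G_diag G_offdiag dominant _ _ _ (cross_coh_ge0 A B)
    (BsA_le i) (BsA_le j).
split=> [i j ij | i].
  rewrite !col_mulmx cinner_projR //; apply: le_trans (ler_normB _ _) _.
  by rewrite lerD ?mutual_coh_ub.
have normsq_At : normsq (col i At) =
    1 - cinner (adjmx Bs *m col i A) (invmx G *m (adjmx Bs *m col i A)).
  by rewrite col_mulmx normsq_cinner cinner_projR // -normsq_cinner unitA.
rewrite normsq_At lerD2l lerN2; apply: le_trans (correction_le i i).
apply: real_ler_norm; rewrite -[X in X \is _](subKr 1) -normsq_At.
by rewrite realB ?real1 ?normsq_real.
Qed.
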